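(* Let $G=(V,E)$ be a finite simple undirected graph, let $A\subseteq V$ be a set of attacked devices, and let $k$ be a nonnegative integer, so that $(G,A,k)$ is an instance of SNP-V. Let $D\subseteq V\setminus A$ be the set of non-attacked devices of degree one in $G$ (i.e. devices not in $A$ with exactly one incident edge in $G$). Then there exists a solution $C$ of the SNP-V instance $(G,A,k)$, i.e. a set $C\subseteq V$ with $|C|\le k$ minimizing $\Phi(G-C)$ among all subsets of $V$ of size at most $k$, such that $C\cap D=\emptyset$.
   Context: Vertices of $G$ are called devices and edges connections. For $C\subseteq V$, $G-C$ denotes the graph obtained from $G$ by deleting every device in $C$ together with its incident connections. Two distinct devices $u,v$ of a graph $H$ are connected if there is a path from $u$ to $v$ in $H$. For a graph $H$ whose device set is a subset of $V$: an (unordered) pair $\{u,v\}$ of distinct devices of $H$ forms a vulnerable connection if $u$ and $v$ are connected in $H$ and $u\in A$ or $v\in A$; the $A$-vulnerability $\mathrm{vul}(H)$ is the number of such pairs. A pair $\{u,v\}$ of distinct devices of $H$ forms a healthy connection if $u$ and $v$ are connected in $H$ and $u\notin A$ and $v\notin A$; the $A$-healthiness $\mathrm{heal}(H)$ is the number of such pairs. The objective value of $H$ is $\Phi(H)=(|V|^2+1)\cdot\mathrm{vul}(H)-\mathrm{heal}(H)$, where $|V|$ is the number of devices of the original graph $G$. The Security Node Problem with Vulnerable Vertices (SNP-V) on input $(G,A,k)$ asks for a set $C\subseteq V$ with $|C|\le k$ such that $\Phi(G-C)$ is minimal; such a $C$ is called a solution. *)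

From mathcomp Require Import all_boot all_order all_algebra.
Set Implicit Arguments. Unset Strict Implicit. Unset Printing Implicit Defensive.
Import GRing.Theory Num.Theory.

Definition simple_graph (T : finType) (e : rel T) : Prop :=
  symmetric e /\ irreflexive e.

Definition del_rel (T : finType) (e : rel T) (C : {set T}) : rel T :=
  [rel x y | [&& x \notin C, y \notin C & e x y]].

Definition conn_del (T : finType) (e : rel T) (C : {set T}) (u v : T) : bool :=
  [&& u \notin C, v \notin C & connect (del_rel e C) u v].

Definition conn_pair (T : finType) (e : rel T) (C : {set T}) (p : {set T}) : bool :=
  (#|p| == 2) && [forall u in p, forall v in p, conn_del e C u v].

Definition vul (T : finType) (e : rel T) (A C : {set T}) : nat :=
  #|[set p : {set T} | conn_pair e C p && (p :&: A != set0)]|.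

Definition heal (T : finType) (e : rel T) (A C : {set T}) : nat :=
  #|[set p : {set T} | conn_pair e C p && (p :&: A == set0)]|.

Definition Phi (T : finType) (e : rel T) (A C : {set T}) : int :=
  ((#|T| ^ 2 + 1) * vul e A C)%:Z - (heal e A C)%:Z.

Definition is_solution (T : finType) (e : rel T) (A : {set T}) (k : nat)
  (C : {set T}) : Prop :=
  #|C| <= k /\ forall C' : {set T}, #|C'| <= k -> (Phi e A C <= Phi e A C')%R.

Definition deg (T : finType) (e : rel T) (x : T) : nat := #|[set y | e x y]|.

Definition D_set (T : finType) (e : rel T) (A : {set T}) : {set T} :=
  [set x | (x \notin A) && (deg e x == 1)].

From mathcomp Require Import all_boot all_order all_algebra zify.
Import Order.TTheory GRing.Theory Num.Theory.
Set Implicit Arguments.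
Unset Strict Implicit.
Unset Printing Implicit Defensive.

(* Take a solution C minimising |C ∩ D| and suppose x ∈ C ∩ D, with unique
   neighbour y.  If no attacked device is connected to y in G - C, giving up
   the protection of x creates no vulnerable connection (x only reaches what
   y reaches) and only adds healthy ones.  Otherwise y is unprotected and not
   in D (it is attacked, or has a neighbour other than x), and protecting y
   instead of x isolates x, so connections can only disappear: either a
   vulnerable connection through y is lost, which outweighs any loss of
   healthy ones since heal < |V|^2 + 1, or y is an isolated attacked device
   of G - C and nothing changes.  In every case Φ does not increase while
   |C ∩ D| drops. *)

Lemma connect_homo (T T' : finType) (e : rel T) (e' : rel T') (f : T -> T') :
  {homo f : a b / e a b >-> connect e' a b} ->
  {homo f : a b / connect e a b >-> connect e' a b}.
Proof.
move=> fe u _ /connectP [p + ->]; elim: p u => [|w p IHp] u /=.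
  by rewrite connect0.
by case/andP=> /fe uw /IHp; apply: connect_trans.
Qed.

Lemma connect_isolated (T : finType) (e : rel T) w v :
  (forall z, ~~ e w z) -> connect e w v -> v = w.
Proof.
move=> isol /connectP [[|z p] /=] => [_ -> // | /andP [wz _] _].
by rewrite (negbTE (isol z)) in wz.
Qed.

Lemma bin2_le_sqr n : 'C(n, 2) <= n ^ 2.
Proof. by rewrite bin2 leq_half_double -muln2; case: n => //= n; nia. Qed.

Section DeletedGraph.
Variables (T : finType) (e : rel T).
Hypothesis esym : symmetric e.
Implicit Types (C p : {set T}) (u v w x y z : T).

Lemma del_rel_sym C : symmetric (del_rel e C).
Proof. by move=> a b; rewrite /del_rel /= esym andbCA. Qed.

Lemma conn_del_sym C u v : conn_del e C u v = conn_del e C v u.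
Proof. by rewrite /conn_del andbCA (sym_connect_sym (del_rel_sym C)). Qed.

Lemma connect_del_notin C u v :
  connect (del_rel e C) u v -> v \notin C -> u \notin C.
Proof. by case/connectP=> [[|z p] /=] => [_ -> // | /andP [/and3P []]]. Qed.

Lemma conn_delS (C1 C2 : {set T}) u v :
  C2 \subset C1 -> conn_del e C1 u v -> conn_del e C2 u v.
Proof.
move=> /subsetP sC /and3P [uC vC c].
have nC a : a \notin C1 -> a \notin C2 by apply: contra => /sC.
rewrite /conn_del !nC //=; apply: connect_sub c => a b /and3P [aC bC ab].
by apply: connect1; rewrite /del_rel /= !nC.
Qed.

Lemma conn_del_isolated (C1 C2 : {set T}) w u v :
  (forall z, ~~ del_rel e C1 w z) -> C2 \subset w |: C1 -> u != w ->
  conn_del e C1 u v -> conn_del e C2 u v.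
Proof.
move=> isol /subsetP sC uw /and3P [uC vC c].
have nC a : a != w -> a \notin C1 -> a \notin C2.
  by move=> aw; apply: contra => /sC; rewrite in_setU1 (negbTE aw).
have nw a b : del_rel e C1 a b -> a != w.
  by move=> ab; apply: contraTneq ab => ->; apply: isol.
have vw : v != w.
  apply: contraNneq uw => vw; apply/eqP/(connect_isolated isol).
  by rewrite -vw (sym_connect_sym (del_rel_sym C1)).
rewrite /conn_del !nC //=; apply: connect_sub c => a b ab; apply: connect1.
have aw := nw _ _ ab; have bw : b != w by apply: (nw _ a); rewrite del_rel_sym.
by case/and3P: ab => aC bC eab; rewrite /del_rel /= eab !nC.
Qed.

Lemma conn_pair_conn C p u v :
  conn_pair e C p -> u \in p -> v \in p -> conn_del e C u v.
Proof. by case/andP=> _ /forall_inP cp /cp /forall_inP; apply. Qed.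

Lemma conn_pair_sub (C1 C2 : {set T}) p :
  {in p &, forall u v, conn_del e C1 u v -> conn_del e C2 u v} ->
  conn_pair e C1 p -> conn_pair e C2 p.
Proof.
move=> sub cp; rewrite /conn_pair; case/andP: (cp) => -> _ /=.
apply/forall_inP => u up; apply/forall_inP => v vp.
exact: sub (conn_pair_conn cp up vp).
Qed.

Lemma conn_pairS (C1 C2 : {set T}) p :
  C2 \subset C1 -> conn_pair e C1 p -> conn_pair e C2 p.
Proof. by move=> sC; apply: conn_pair_sub => u v _ _; apply: conn_delS. Qed.

Lemma conn_pair_notin C p u : conn_pair e C p -> u \in p -> u \notin C.
Proof. by move=> cp up; case/and3P: (conn_pair_conn cp up up). Qed.

Lemma conn_pair2 C y z :
  y != z -> conn_del e C y z -> conn_pair e C [set y; z].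
Proof.
move=> yz cyz; rewrite /conn_pair cards2 yz /=.
have [yC zC _] := and3P cyz.
have refl a : a \notin C -> conn_del e C a a.
  by rewrite /conn_del connect0 => ->.
apply/forall_inP => u; rewrite !inE => /orP [] /eqP ->;
apply/forall_inP => v; rewrite !inE => /orP [] /eqP ->;
by rewrite ?refl // ?cyz // conn_del_sym.
Qed.

Lemma conn_pair_isolated (C1 C2 : {set T}) w p :
  (forall z, ~~ del_rel e C1 w z) -> C2 \subset w |: C1 ->
  conn_pair e C1 p -> conn_pair e C2 p.
Proof.
move=> isol sC cp; have wp : w \notin p.
  apply/negP => wp; have /card_gt0P [z] : 0 < #|p :\ w|.
    by case/andP: cp; rewrite (cardsD1 w) wp add1n => /eqP [->].
  rewrite in_setD1 => /andP [zw zp].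
  case/and3P: (conn_pair_conn cp wp zp) => _ _ /(connect_isolated isol) zwE.
  by rewrite zwE eqxx in zw.
apply: conn_pair_sub cp => u v up _; apply: conn_del_isolated isol sC _.
by apply: contraNneq wp => <-.
Qed.

Lemma deg1_neighbour x : deg e x = 1 -> exists y, e x =1 pred1 y.
Proof.
by move/eqP/cards1P => [y yE]; exists y => z; rewrite /= -in_set1 -yE inE.
Qed.

End DeletedGraph.

Section Objective.
Variables (T : finType) (e : rel T) (A : {set T}).
Implicit Types (C p : {set T}).

Lemma heal_lt C : heal e A C < #|T| ^ 2 + 1.
Proof.
rewrite addn1 ltnS; apply: leq_trans (bin2_le_sqr _); rewrite -card_draws.
by apply/subset_leq_card/subsetP => p; rewrite !inE => /andP [/andP [->]].
Qed.

Lemma Phi_le (C1 C2 : {set T}) :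
  vul e A C1 <= vul e A C2 -> heal e A C2 <= heal e A C1 ->
  (Phi e A C1 <= Phi e A C2)%R.
Proof.
by move=> lev leh; apply: lerB; rewrite lez_nat // leq_mul2l lev orbT.
Qed.

Lemma Phi_lt (C1 C2 : {set T}) :
  vul e A C1 < vul e A C2 -> (Phi e A C1 < Phi e A C2)%R.
Proof.
rewrite /Phi => ltv; have := heal_lt C2.
have : (#|T| ^ 2 + 1) * (vul e A C1).+1 <= (#|T| ^ 2 + 1) * vul e A C2.
  by rewrite leq_mul2l ltv orbT.
lia.
Qed.

Lemma leq_vul (C1 C2 : {set T}) :
  (forall p, conn_pair e C1 p -> p :&: A != set0 -> conn_pair e C2 p) ->
  vul e A C1 <= vul e A C2.
Proof.
move=> sub; apply/subset_leq_card/subsetP => p; rewrite !inE.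
by case/andP=> cp pA; rewrite pA (sub p cp pA).
Qed.

Lemma ltn_vul (C1 C2 : {set T}) q :
  (forall p, conn_pair e C1 p -> conn_pair e C2 p) ->
  conn_pair e C2 q -> q :&: A != set0 -> ~~ conn_pair e C1 q ->
  vul e A C1 < vul e A C2.
Proof.
move=> sub cq qA nq; apply/proper_card/properP; split.
  by apply/subsetP => p; rewrite !inE => /andP [/sub -> ->].
by exists q; rewrite !inE ?cq ?qA // (negbTE nq).
Qed.

Lemma leq_heal (C1 C2 : {set T}) :
  (forall p, conn_pair e C1 p -> conn_pair e C2 p) ->
  heal e A C1 <= heal e A C2.
Proof.
move=> sub; apply/subset_leq_card/subsetP => p; rewrite !inE.
by case/andP=> /sub -> ->.
Qed.

End Objective.

Section PendantExchange.
Variables (T : finType) (e : rel T) (A C : {set T}) (x y : T).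
Hypotheses (esym : symmetric e) (eirr : irreflexive e).
Hypotheses (xC : x \in C) (ex : e x =1 pred1 y).

Lemma conn_del_pendant u v :
  conn_del e (C :\ x) u v -> v != x ->
  conn_del e C (if u == x then y else u) v.
Proof.
move=> /and3P [uC vC c] vx.
have nC a : a != x -> a \notin C :\ x -> a \notin C by rewrite !inE => ->.
(* Contracting x onto its only neighbour y maps walks to walks. *)
pose f a := if a == x then y else a.
have fy : f y = y by rewrite /f if_same.
have {}c : connect (del_rel e C) (f u) (f v).
  apply: connect_homo c => a b /and3P [aC bC ab].
  have [ax | ax] := eqVneq a x.
    by move: ab; rewrite ax ex => /eqP ->; rewrite fy /f eqxx.
  have [bx | bx] := eqVneq b x.
    by move: ab; rewrite bx esym ex => /eqP ->; rewrite fy /f eqxx.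
  by apply: connect1; rewrite /f (negbTE ax) (negbTE bx) /del_rel /= ab !nC.
rewrite /f (negbTE vx) in c.
have vC' := nC _ vx vC.
by rewrite /conn_del c vC' (connect_del_notin c vC').
Qed.

Lemma Phi_remove_pendant :
  x \notin A -> (forall a, a \in A -> ~~ conn_del e C y a) ->
  (Phi e A (C :\ x) <= Phi e A C)%R.
Proof.
move=> xA noA; apply: Phi_le; last first.
  by apply: leq_heal => p; apply/conn_pairS/subsetDl.
apply: leq_vul => p cp /set0Pn [a]; rewrite inE => /andP [ap aA].
have ax : a != x by apply: contraNneq xA => <-.
have xp : x \notin p.
  apply: contraNN (noA a aA) => xp.
  by have := conn_del_pendant (conn_pair_conn cp xp ap) ax; rewrite eqxx.
apply: conn_pair_sub cp => u v up vp c.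
have nx b : b \in p -> b != x by move=> bp; apply: contraNneq xp => <-.
by have := conn_del_pendant c (nx v vp); rewrite (negbTE (nx u up)).
Qed.

Lemma conn_pair_swap p : conn_pair e (y |: (C :\ x)) p -> conn_pair e C p.
Proof.
apply: (conn_pair_isolated esym (w := x)).
  move=> z; apply/negP => /and3P [_ zC]; rewrite ex => /eqP zy.
  by rewrite zy setU11 in zC.
apply/subsetP => a aC; rewrite !inE aC andbT.
by case: eqVneq; rewrite ?orbT.
Qed.

Lemma Phi_swap_pendant_lt z :
  z != y -> conn_del e C y z -> (y \in A) || (z \in A) ->
  (Phi e A (y |: (C :\ x)) < Phi e A C)%R.
Proof.
move=> zy cyz yzA; apply/Phi_lt/(ltn_vul (q := [set y; z])).
- exact: conn_pair_swap.
- by apply: conn_pair2 cyz; rewrite // eq_sym.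
- by apply/set0Pn; case/orP: yzA => [yA|zA]; [exists y | exists z];
    rewrite !inE eqxx ?orbT ?yA ?zA.
- by apply/negP => /conn_pair_notin /(_ (set21 y z)); rewrite !inE eqxx.
Qed.

Lemma Phi_swap_pendant_le :
  (forall z, ~~ del_rel e C y z) -> (Phi e A (y |: (C :\ x)) <= Phi e A C)%R.
Proof.
move=> isol; apply: Phi_le; first by apply: leq_vul => p /conn_pair_swap.
apply: leq_heal => p; apply: (conn_pair_isolated esym isol).
exact/setUS/subsetDl.
Qed.

Lemma Phi_swap_pendant a :
  a \in A -> conn_del e C y a -> (Phi e A (y |: (C :\ x)) <= Phi e A C)%R.
Proof.
move=> aA cya; have [ay | ay] := eqVneq a y; last first.
  by apply/ltW/(Phi_swap_pendant_lt ay cya); rewrite aA orbT.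
have yA : y \in A by rewrite -ay.
have [/existsP [z yz] | /existsPn isol] := boolP [exists z, del_rel e C y z].
  apply/ltW/(Phi_swap_pendant_lt (z := z)); rewrite ?yA //.
    by apply: contraTneq yz => ->; rewrite /del_rel /= eirr !andbF.
  by case/and3P: (yz) => yC zC _; rewrite /conn_del yC zC connect1.
exact: Phi_swap_pendant_le.
Qed.

Lemma conn_attacked_notin_D_set a :
  a \in A -> conn_del e C y a -> y \notin D_set e A.
Proof.
move=> aA cya; rewrite inE negb_and negbK; have [// | yA /=] := boolP (y \in A).
apply/eqP => /deg1_neighbour [x' ey].
have yx : e y x by rewrite esym ex /=.
have isol z : ~~ del_rel e C y z.
  apply/negP => /and3P [_ zC]; rewrite ey => /eqP zx'.
  by move: yx zC; rewrite ey zx' => /eqP <-; rewrite xC.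
case/and3P: cya => _ _ /(connect_isolated isol) ay.
by rewrite -ay aA in yA.
Qed.

Lemma pendant_exchange :
  x \in D_set e A -> exists C' : {set T},
  [/\ #|C'| <= #|C|, (Phi e A C' <= Phi e A C)%R &
      #|C' :&: D_set e A| < #|C :&: D_set e A|].
Proof.
move=> xD; have ltD : #|(C :\ x) :&: D_set e A| < #|C :&: D_set e A|.
  apply/proper_card/properP; split; first exact/setSI/subsetDl.
  by exists x; rewrite in_setI ?in_setD1 ?eqxx ?xC ?xD.
have [/exists_inP [a aA cya] | noA] := boolP [exists a in A, conn_del e C y a].
  exists (y |: (C :\ x)); split.
  - by rewrite cardsU1 (cardsD1 x C) xC; case: (_ \notin _).
  - exact: Phi_swap_pendant aA cya.
  - apply: leq_ltn_trans ltD; apply/subset_leq_card/subsetP => b.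
    rewrite in_setI in_setU1 => /andP [/orP [/eqP -> | bC] bD].
      by move: (conn_attacked_notin_D_set aA cya); rewrite bD.
    by rewrite in_setI bC bD.
exists (C :\ x); split; [exact/subset_leq_card/subsetDl | | exact: ltD].
apply: Phi_remove_pendant => [|b bA].
  by move: xD; rewrite inE => /andP [].
by apply: contraNN noA => cyb; apply/exists_inP; exists b.
Qed.

End PendantExchange.

Lemma exists_solution (T : finType) (e : rel T) (A : {set T}) (k : nat) :
  exists C, is_solution e A k C.
Proof.
have k0 : #|@set0 T| <= k by rewrite cards0.
have [C Ck minC] := arg_minP (P := fun C : {set T} => #|C| <= k) (Phi e A) k0.
by exists C; split=> // C' /minC.
Qed.

Theorem proposition1 (T : finType) (e : rel T) (A : {set T}) (k : nat) :
  simple_graph e ->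
  exists C : {set T}, is_solution e A k C /\ C :&: D_set e A = set0.
Proof.
move=> [esym eirr]; have [C0 [C0k minC0]] := exists_solution e A k.
pose optimal (C : {set T}) := (#|C| <= k) && (Phi e A C == Phi e A C0).
have optC0 : optimal C0 by rewrite /optimal C0k eqxx.
have [C /andP [Ck /eqP PhiC] minC] :=
  arg_minnP (fun C : {set T} => #|C :&: D_set e A|) optC0.
exists C; split; first by split=> [//|C' /minC0]; rewrite PhiC.
apply/eqP; apply: contraT => /set0Pn [x]; rewrite in_setI => /andP [xC xD].
have [y ex] : exists y, e x =1 pred1 y.
  by apply: deg1_neighbour; move: xD; rewrite inE => /andP [_ /eqP].
have [C' [C'C PhiC' ltD]] := pendant_exchange esym eirr xC ex xD.
have C'k : #|C'| <= k := leq_trans C'C Ck.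
have optC' : optimal C'.
  apply/andP; split; first exact: C'k.
  by rewrite eq_le -{1}PhiC PhiC' (minC0 _ C'k).
by rewrite ltnNge minC in ltD.
Qed.
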